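(* Let $P$ denote the law of the (discrete-time, single-type) CMJ random tree and $\hat{P}$ the law of the size-biased CMJ tree (with immortal lineage). For every fixed level $n$ and every tree $t$, $$\hat{P}([T]_n = t) = E(N_n; [T]_n = t),$$ where the Nerman martingale $$N_n = \sum_{y \in I_n} e^{-\alpha \sigma_y}$$ is the reproductive value of the coming generation at time $n$.
   Context: Setting: a single-type Crump–Mode–Jagers (general branching) process in discrete time started from one ancestor born at time $0$. The individual reproduction law is given by probabilities $p_0$ and $p_k(n_1,\dots,n_k)$, $1\le n_1\le\dots\le n_k<\infty$, $k\ge1$, where $p_k(n_1,\dots,n_k)$ is the probability of having exactly $k$ children born at ages $n_1,\dots,n_k$ of the mother; individuals reproduce independently with this common law. Individuals are labelled by finite sequences $x=(x_1,\dots,x_j)$ of positive integers (the $i$-th daughter of $x$ is $xi$), each with an i.i.d. life $\omega_x$; the bearing ages of $x$ are $\tau_i(\omega_x)$ ($=\infty$ for $i$ beyond the offspring number), and the birth time of $x=(x_1,\dots,x_j)$ is $\sigma_x = \tau_{x_1}(\omega_0)+\tau_{x_2}(\omega_{x_1})+\dots+\tau_{x_j}(\omega_{x_1\dots x_{j-1}})$. Let $m_n$ be the mean number of children born to an individual at age $n$, and let $\alpha$ be the Malthusian parameter, the solution of $\sum_{n\ge1} e^{-\alpha n} m_n = 1$. The stopped tree at level $n$ is $[T]_n = \{\omega_x, x : \sigma_x \le n\}$ (all individuals born by time $n$ together with their complete lives). The coming generation $I_n$ at time $n$ is the set of vertices of the stopped tree $[T]_n$ located above level $n$, i.e. individuals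 $y$ with $\sigma_y > n$ whose mother was born by time $n$. The size-biased measure $\hat{P}$: there is a distinguished immortal lineage starting from the ancestor. An immortal individual has $k$ children at ages $n_1,\dots,n_k$ and designates its $j$-th child as the next immortal with probability $\hat{p}_{k,j}(n_1,\dots,n_k) = 1_{\{1\le j\le k\}} e^{-\alpha n_j} p_k(n_1,\dots,n_k)$; all other (mortal) individuals reproduce independently according to the original law $p_k(n_1,\dots,n_k)$. $\hat{P}([T]_n=t)$ is the marginal law of the (unlabelled-lineage) stopped tree under this measure. *)

From HB Require Import structures.
From mathcomp Require Import all_boot all_order all_algebra.
From mathcomp Require Import all_classical all_reals all_analysis.
Set Implicit Arguments. Unset Strict Implicit. Unset Printing Implicit Defensive.
Import Order.TTheory GRing.Theory Num.Theory.
Local Open Scope classical_set_scope.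
Local Open Scope ring_scope.

(* Ulam-Harris labels: x = (x_1,...,x_j), daughters indexed from 1. *)
Definition label := seq nat.
(* A life: the (finite, nondecreasing) list of bearing ages n_1 <= ... <= n_k. *)
Definition life := seq nat.

Definition valid_life (l : life) : bool := sorted leq l && all (fun a => 0 < a)%N l.

(* tau_i(omega): the age at which the i-th child is born (None = infinity). *)
Definition tau (i : nat) (l : life) : option nat :=
  if (0 < i)%N && (i <= size l)%N then Some (nth 0%N l i.-1) else None.

(* Birth time sigma_x given the lives w of all individuals (None = infinity). *)
Fixpoint birth (w : label -> life) (x : label) : option nat :=
  match x with
  | [::] => Some 0%N
  | i :: x' =>
      match tau i (w [::]), birth (fun y => w (i :: y)) x' with
      | Some a, Some b => Some (a + b)%N
      | _, _ => None
      end
  end.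

Definition born_by (n : nat) (w : label -> life) (x : label) : Prop :=
  exists s, birth w x = Some s /\ (s <= n)%N.

Definition stopped (n : nat) (w : label -> life) : label -> option life :=
  fun x => if birth w x is Some s then (if (s <= n)%N then Some (w x) else None)
           else None.

Definition coming (n : nat) (w : label -> life) : set label :=
  [set y | exists x i, y = rcons x i /\ born_by n w x /\
                       exists s, birth w y = Some s /\ (n < s)%N].

Definition nerman {R : realType} (alpha : R) (n : nat) (w : label -> life) : \bar R :=
  (\esum_(y in coming n w) (expR (- alpha * (odflt 0%N (birth w y))%:R))%:E)%E.

Definition mean_at {R : realType} (p : life -> R) (a : nat) : \bar R :=
  (\esum_(l in [set: life]) (p l * (count_mem a l)%:R)%:E)%E.

Definition phat {R : realType} (alpha : R) (p : life -> R) (j : nat) (l : life) : R :=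
  if tau j l is Some a then expR (- alpha * a%:R) * p l else 0.

(* Law of the life of individual z.1 (with life z.2) when the immortal of
   generation (size y) is y: immortal strict ancestors of y use phat with the
   index of the next immortal, all other individuals use p. *)
Definition size_biased_weight {R : realType} (alpha : R) (p : life -> R)
    (y : label) (z : label * life) : R :=
  if (size z.1 < size y)%N && prefix z.1 y then phat alpha p (nth 0%N y (size z.1)) z.2
  else p z.2.

From HB Require Import structures.
From mathcomp Require Import all_boot all_order all_algebra.
From mathcomp Require Import all_classical all_reals all_analysis.
Import Order.TTheory GRing.Theory Num.Theory.
Local Open Scope classical_set_scope.
Local Open Scope ring_scope.
Set Implicit Arguments. Unset Strict Implicit.

(* On the event [[T]_n = t] the individuals born by time [n] form a finite prefix-closed
   set [D] with prescribed lives, and the immortal lineage of the size-biased tree leaves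
   [D] through exactly one daughter [y] of a member of [D]. The size-biased weight of this
   configuration is [P([T]_n = t)] times the product of the factors [e^{-alpha tau}] along
   the ancestry of [y], that is [e^{-alpha sigma_y}]; the daughters outside [D] that are
   born at all form the coming generation [I_n]. Summing over the exit point gives
   [P([T]_n = t) N_n], and [N_n] is constant on the event. *)

Section Birth.
Variable w : label -> life.

Lemma birth_rcons x j : birth w (rcons x j) =
  if birth w x is Some a then (if tau j (w x) is Some b then Some (a + b)%N else None)
  else None.
Proof.
elim: x w => [|i x IH] v /=.
  by case: (tau j (v [::])) => // b; rewrite add0n addn0.
rewrite IH; case: (tau i (v [::])) => [a|] //.
by case: (birth _ x) => [b|] //; case: (tau j _) => [c|] //; rewrite addnA.
Qed.

Lemma born_by_nil n : born_by n w [::].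
Proof. by exists 0%N. Qed.

Lemma born_by_rcons n x j : born_by n w (rcons x j) -> born_by n w x.
Proof.
move=> [s [+ sn]]; rewrite birth_rcons.
case hx: (birth w x) => [a|] //; case: (tau j _) => [b|] // [es].
by exists a; split => //; rewrite -es in sn; exact: leq_trans (leq_addr _ _) sn.
Qed.

Lemma born_by_take n x m : born_by n w x -> born_by n w (take m x).
Proof.
elim/last_ind: x => [|x j IH] hb //.
rewrite -cats1 take_cat; case: ifP => hm; first exact/IH/(born_by_rcons hb).
by case: (m - size x)%N => [|k] /=; rewrite ?cats0 ?take0 ?cats1 //; exact: born_by_rcons hb.
Qed.

End Birth.

Lemma tauP j l a : tau j l = Some a -> [/\ (0 < j)%N, (j <= size l)%N & a = nth 0%N l j.-1].
Proof. by rewrite /tau; case: ifP => // /andP[h1 h2] [<-]. Qed.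

Lemma birth_ext (w w' : label -> life) y :
  (forall m, (m < size y)%N -> w (take m y) = w' (take m y)) -> birth w y = birth w' y.
Proof.
elim: y w w' => [|i y IH] w w' H //=.
rewrite (H 0%N) // (IH (fun z => w (i :: z)) (fun z => w' (i :: z))) //.
by move=> m hm; have /= := H m.+1 hm.
Qed.

(* By [stopped_agreeP], [w] and [w0] have the same stopped tree at level [n]. *)
Definition agree_on_born n (w0 w : label -> life) : Prop :=
  forall x, born_by n w0 x -> w x = w0 x.

Section Agree.
Variables (n : nat) (w0 w : label -> life).
Hypothesis agree : agree_on_born n w0 w.

Lemma birth_agree x : born_by n w0 x -> birth w x = birth w0 x.
Proof. by move=> hb; apply: birth_ext => m _; apply/agree/born_by_take. Qed.

Lemma birth_agree_rcons x i : born_by n w0 x -> birth w (rcons x i) = birth w0 (rcons x i).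
Proof. by move=> hb; rewrite !birth_rcons agree // birth_agree. Qed.

Lemma born_by_agree x : born_by n w x <-> born_by n w0 x.
Proof.
elim/last_ind: x => [|x j IH]; first by split => _; apply: born_by_nil.
split=> hb.
  have hx : born_by n w0 x by apply/IH/(born_by_rcons hb).
  by rewrite /born_by -birth_agree_rcons.
by rewrite /born_by birth_agree_rcons //; apply: born_by_rcons hb.
Qed.

End Agree.

Lemma stopped_agreeP n (w0 w : label -> life) :
  stopped n w = stopped n w0 <-> agree_on_born n w0 w.
Proof.
have stoppedE v x : stopped n v x = if `[< born_by n v x >] then Some (v x) else None.
  rewrite /stopped; case: asboolP => [[s [-> ->]] //|nb].
  by case hs: (birth v x) => [s|] //; case: ifP => // sn; case: nb; exists s.
split=> [E x hb|H]; last first.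
  apply/funext => x; rewrite !stoppedE (asbool_equiv_eq (born_by_agree H x)).
  by case: asboolP => // /H ->.
by move: (congr1 (@^~ x) E); rewrite !stoppedE (asboolT hb); case: asboolP => // _ [].
Qed.

Lemma stopped_event (T : Type) n (w0 : label -> life) (V : label -> T -> life) :
  [set om | stopped n (V ^~ om) = stopped n w0] = [set om | agree_on_born n w0 (V ^~ om)].
Proof. by apply/seteqP; split => om /stopped_agreeP. Qed.

Lemma nerman_agree {R : realType} (alpha : R) n (w0 w : label -> life) :
  agree_on_born n w0 w -> nerman alpha n w = nerman alpha n w0.
Proof.
move=> H; rewrite /nerman.
have -> : coming n w = coming n w0.
  apply/seteqP; split => y [x [i [-> [hb [s [hs hsn]]]]]].
    have hb0 := (born_by_agree H x).1 hb.
    by exists x, i; split => //; split => //; exists s; rewrite -(birth_agree_rcons H i hb0).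
  exists x, i; split => //; split; first exact/(born_by_agree H).
  by exists s; rewrite (birth_agree_rcons H i hb).
by apply: eq_esum => y [x [i [-> [hb _]]]]; rewrite (birth_agree_rcons H i hb).
Qed.

Section Finiteness.
Variables (n : nat) (w : label -> life).

Fixpoint generation (k : nat) : seq label :=
  if k is k'.+1 then
    flatten [seq [seq rcons x j | j <- iota 1 (size (w x))] | x <- generation k']
  else [:: [::]].

Lemma born_by_generation x : born_by n w x -> x \in generation (size x).
Proof.
elim/last_ind: x => [|y j IH] hb; first by rewrite inE.
have /IH hy := born_by_rcons hb; case: hb => s [+ _]; rewrite birth_rcons.
case: (birth w y) => // b; case ht: (tau j (w y)) => [a|] // _.
have [j0 js _] := tauP ht.
rewrite size_rcons /=; apply/flattenP; exists [seq rcons y j' | j' <- iota 1 (size (w y))].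
  by apply/mapP; exists y.
by apply/mapP; exists j => //; rewrite mem_iota j0 add1n ltnS.
Qed.

Hypothesis valid_born : forall x, born_by n w x -> valid_life (w x).

(* Bearing ages are positive, so a birth time bounds the generation. *)
Lemma size_le_birth x s : birth w x = Some s -> (s <= n)%N -> (size x <= s)%N.
Proof.
elim/last_ind: x s => [|y j IH] s //.
rewrite birth_rcons; case hy: (birth w y) => [b|] //; case ht: (tau j (w y)) => [a|] // [<-] hs.
have hb : born_by n w y by exists b; split => //; apply: leq_trans hs; rewrite leq_addr.
have [j0 js ->] := tauP ht.
have /andP[_ /allP pos] := valid_born hb.
rewrite size_rcons -addn1 leq_add ?(IH b) ?(leq_trans (leq_addr _ _) hs) ?pos //.
by apply: mem_nth; rewrite prednK.
Qed.

Lemma born_by_finite : exists2 D : seq label, uniq D & forall x, x \in D <-> born_by n w x.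
Proof.
exists (undup [seq x <- flatten [seq generation k | k <- iota 0 n.+1] | `[< born_by n w x >]]).
  exact: undup_uniq.
move=> x; rewrite mem_undup mem_filter; split; first by move=> /andP[/asboolP].
move=> hb; rewrite asboolT // andTb; apply/flattenP; exists (generation (size x)).
  apply/mapP; exists (size x) => //; rewrite mem_iota add0n ltnS.
  by case: hb => s [hs sn]; exact: leq_trans (size_le_birth hs sn) sn.
exact: born_by_generation.
Qed.

End Finiteness.

Definition prefix_closed (D : seq label) : Prop := forall x m, x \in D -> take m x \in D.

Definition prefixes (x : label) : seq label := [seq take m x | m <- iota 0 (size x).+1].

Lemma mem_prefixes x z : (z \in prefixes x) = prefix z x.
Proof.
apply/mapP/idP => [[m _ ->]|]; first exact: prefix_take.
move=> zx; exists (size z); first by rewrite mem_iota ltnS size_prefix.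
by move: zx; rewrite prefixE => /eqP ->.
Qed.

Lemma prefixes_uniq x : uniq (prefixes x).
Proof.
rewrite map_inj_in_uniq ?iota_uniq // => a b.
by rewrite !mem_iota /= !ltnS => ha hb /(congr1 size); rewrite !size_takel.
Qed.

Lemma prefixes_closed x : prefix_closed (prefixes x).
Proof. by move=> z m; rewrite !mem_prefixes; apply/prefix_trans/prefix_take. Qed.

Section Lineage.
Variable io : nat -> label.
Hypotheses (io0 : io 0%N = [::]) (ioS : forall k, exists j, io k.+1 = rcons (io k) j).

Lemma size_lineage k : size (io k) = k.
Proof. by elim: k => [|k IH]; rewrite ?io0 //; have [j ->] := ioS k; rewrite size_rcons IH. Qed.

Lemma lineage_take a b : (a <= b)%N -> io a = take a (io b).
Proof.
move=> /subnKC <-; elim: (b - a)%N => [|k IH].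
  by rewrite addn0 -{2}(size_lineage a) take_size.
rewrite addnS; have [j ->] := ioS (a + k); by rewrite -cats1 takel_cat ?size_lineage ?leq_addr.
Qed.

Variable D : seq label.
Hypothesis D_closed : prefix_closed D.

Lemma lineage_mem x j m :
  x \in D -> io (size x).+1 = rcons x j -> (m <= size x)%N -> io m \in D.
Proof.
move=> xD ex hm; rewrite (@lineage_take m (size x).+1) ?(leqW hm) // ex.
by rewrite -cats1 takel_cat // D_closed.
Qed.

Lemma lineage_exit : [::] \in D ->
  exists x j, [/\ x \in D, rcons x j \notin D & io (size x).+1 = rcons x j].
Proof.
move=> rootD.
have exitD : exists k, io k \notin D.
  exists (\max_(x <- D) size x).+1; apply/negP => /(@leq_bigmax_seq _ D xpredT size _) /(_ isT).
  by rewrite size_lineage ltnn.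
case: (ex_minnP exitD) => -[|m]; first by rewrite io0 rootD.
have [j ej] := ioS m; rewrite ej => exD min.
have mD : io m \in D by apply/negPn/negP => /min; rewrite ltnn.
by exists (io m), j; rewrite size_lineage ej.
Qed.

Lemma lineage_exit_unique x x' j j' : x \in D -> x' \in D ->
  rcons x j \notin D -> rcons x' j' \notin D ->
  io (size x).+1 = rcons x j -> io (size x').+1 = rcons x' j' -> x = x' /\ j = j'.
Proof.
move=> xD x'D nD nD' ex ex'.
have no_earlier_exit y i y' i' : y' \in D -> rcons y i \notin D ->
    io (size y).+1 = rcons y i -> io (size y').+1 = rcons y' i' -> (size y' <= size y)%N.
  move=> y'D nyD ey ey'; rewrite leqNgt; apply/negP => lt.
  by move: nyD; rewrite -ey (lineage_mem y'D ey' lt).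
have sz : size x = size x'.
  by apply/eqP; rewrite eqn_leq (no_earlier_exit x' j' x j) ?(no_earlier_exit x j x' j').
by move: ex; rewrite sz ex' => /rcons_inj[-> ->].
Qed.

End Lineage.

Lemma perm_strict_prefixes (D : seq label) (y : label) :
  uniq D -> (forall m, (m < size y)%N -> take m y \in D) ->
  perm_eq [seq z <- D | (size z < size y)%N && prefix z y]
          [seq take m y | m <- iota 0 (size y)].
Proof.
move=> uD yD; apply: uniq_perm; first exact: filter_uniq.
  rewrite map_inj_in_uniq ?iota_uniq // => a b.
  by rewrite !mem_iota /= => ha hb /(congr1 size); rewrite !size_takel // ltnW.
move=> z; rewrite mem_filter; apply/andP/mapP => [[/andP[zy]]|[m]].
  by rewrite prefixE => /eqP ez _; exists (size z); rewrite ?mem_iota.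
rewrite mem_iota /= => hm ->; rewrite yD // size_takel ?(ltnW hm) //.
by rewrite hm prefix_take.
Qed.

Definition discount {R : realType} (alpha : R) (o : option nat) : R :=
  if o is Some s then expR (- alpha * s%:R) else 0.

Section Products.
Variables (R : realType) (alpha : R) (p : life -> R).

Lemma prod_discount_tau (w : label -> life) y :
  \prod_(m < size y) discount alpha (tau (nth 0%N y m) (w (take m y)))
  = discount alpha (birth w y).
Proof.
elim: y w => [|i y IH] w /=; first by rewrite big_ord0 mulr0 expR0.
rewrite big_ord_recl /=; under eq_bigr do rewrite add0n.
rewrite (IH (fun z => w (i :: z))).
case: (tau i (w [::])) => [a|] /=; last by rewrite mul0r.
case: (birth _ y) => [b|] /=; last by rewrite mulr0.
by rewrite -expRD natrD mulrDr.
Qed.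

Lemma prod_size_biased_weight (D : seq label) (v : label -> life) y :
  uniq D -> (forall m, (m < size y)%N -> take m y \in D) ->
  \prod_(z <- D) size_biased_weight alpha p y (z, v z)
  = (\prod_(z <- D) p (v z)) * discount alpha (birth v y).
Proof.
move=> uD yD; pose anc z := (size z < size y)%N && prefix z y.
have weightE z : size_biased_weight alpha p y (z, v z) =
    p (v z) * (if anc z then discount alpha (tau (nth 0%N y (size z)) (v z)) else 1).
  rewrite /size_biased_weight /phat /anc /=; case: ifP => _; last by rewrite mulr1.
  by case: tau => [a|] /=; rewrite ?mul0r ?mulr0 // mulrC.
rewrite (eq_bigr _ (fun z _ => weightE z)) big_split /=; congr (_ * _).
rewrite -big_mkcond -big_filter (perm_big _ (perm_strict_prefixes uD yD)).
rewrite big_map -prod_discount_tau -{1}(subn0 (size y)) -/(index_iota 0 _) big_mkord.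
by apply: eq_bigr => i _; rewrite size_takel // ltnW.
Qed.

End Products.

Lemma measurable_agree d (T : measurableType d) (W : label -> T -> life)
    (W_meas : forall x l, measurable [set om | W x om = l]) (A : set label) (v : label -> life) :
  measurable [set om | forall x, A x -> W x om = v x].
Proof.
pose F x := if pselect (A x) then ~` [set om | W x om = v x] else set0.
have -> : [set om | forall x, A x -> W x om = v x] = ~` \bigcup_x F x.
  apply/seteqP; split => om /=.
    by move=> H [x _]; rewrite /F; case: pselect => // Ax; apply; exact: H.
  move=> H x Ax; apply: contra_notP H => neq.
  by exists x => //; rewrite /F; case: pselect.
apply: measurableC; apply: countable_bigcupT_measurable => [|x]; first exact: countableP.
by rewrite /F; case: pselect => ?; [apply: measurableC; exact: W_meas|exact: measurable0].
Qed.

Section Agreement.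
Variables (d : measure_display) (T : measurableType d) (R : realType).
Variable mu : {measure set T -> \bar R}.

Lemma integral_null_set (N : set T) (f : T -> \bar R) :
  measurable N -> mu N = 0 :> \bar R -> (\int[mu]_(om in N) f om = 0)%E.
Proof.
move=> mN N0; rewrite (eq_measure_integral mzero) ?integral_measure_zero // => A mA AN.
suff -> : mu A = 0 :> \bar R by [].
by apply/eqP; rewrite eq_le measure_ge0 andbT -N0 le_measure ?inE.
Qed.

Variable W : label -> T -> life.
Hypothesis W_meas : forall x l, measurable [set om | W x om = l].

Lemma le_measure_agree (A B : set label) (v : label -> life) : A `<=` B ->
  (mu [set om | forall x, B x -> W x om = v x] <= mu [set om | forall x, A x -> W x om = v x])%E.
Proof.
move=> AB; apply: le_measure; rewrite ?inE; try exact: measurable_agree.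
by move=> om H x /AB; apply: H.
Qed.

Variable p : life -> R.
Hypothesis W_iid : forall S : seq (label * life), uniq (map fst S) ->
  mu [set om | forall z, z \in S -> W z.1 om = z.2] = (\prod_(z <- S) p z.2)%:E.

Lemma measure_agree_seq (D : seq label) (v : label -> life) : uniq D ->
  mu [set om | forall x, x \in D -> W x om = v x] = (\prod_(z <- D) p (v z))%:E.
Proof.
move=> uD; have := @W_iid [seq (z, v z) | z <- D]; rewrite -map_comp map_id big_map => /(_ uD) <-.
congr (mu _); apply/seteqP; split => om /= H.
  by move=> _ /mapP[z zD ->]; apply: H.
by move=> z zD; apply: (H (z, v z)); apply: map_f.
Qed.

Lemma measure_agree_null (A : set label) (v : label -> life) x : A x -> p (v x) = 0 ->
  mu [set om | forall z, A z -> W z om = v z] = 0 :> \bar R.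
Proof.
move=> Ax p0; apply/eqP; rewrite eq_le measure_ge0 andbT.
apply: le_trans (le_measure_agree (A := [set` [:: x]]) v _) _.
  by move=> z; rewrite /= inE => /eqP ->.
by rewrite measure_agree_seq // big_seq1 p0.
Qed.

End Agreement.

(* The contribution of the daughter [j] of [x] to [N_n] when [D] lists the individuals
   born by time [n]. *)
Definition exit_value {R : realType} (alpha : R) (D : seq label) (v : label -> life)
    (x : label) (j : nat) : R :=
  if rcons x j \in D then 0 else discount alpha (birth v (rcons x j)).

Section SizeBiased.
Variables (R : realType) (alpha : R) (p : life -> R).
Variables (d : measure_display) (Omega : measurableType d) (Ph : probability Omega R).
Variables (Wh : label -> Omega -> life) (iota : nat -> Omega -> label).
Hypotheses (Wh_meas : forall x l, measurable [set om | Wh x om = l])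
  (iota_meas : forall k y, measurable [set om | iota k om = y])
  (iota0 : forall om, iota 0%N om = [::])
  (iotaS : forall om k, exists j, iota k.+1 om = rcons (iota k om) j)
  (Ph_law : forall (y : label) (S : seq (label * life)),
      uniq (map fst S) ->
      (forall z, z \in S -> ~~ prefix y z.1) ->
      (forall m, (m < size y)%N -> take m y \in map fst S) ->
      Ph [set om | iota (size y) om = y /\ forall z, z \in S -> Wh z.1 om = z.2]
        = (\prod_(z <- S) size_biased_weight alpha p y z)%:E).

Section ExitDecomposition.
Variables (D : seq label) (v : label -> life).
Hypotheses (uD : uniq D) (D_closed : prefix_closed D) (rootD : [::] \in D).

Let E := [set om | forall x, x \in D -> Wh x om = v x].

Let exit_event x j :=
  [set om | E om /\ iota (size x).+1 om = rcons x j /\ rcons x j \notin D].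

Lemma measurable_exit_event x j : measurable (exit_event x j).
Proof.
case: (boolP (rcons x j \in D)) => xjD.
  by rewrite (_ : exit_event x j = set0) //; apply/seteqP; split => om // [_ []]; rewrite xjD.
rewrite (_ : exit_event x j = E `&` [set om | iota (size x).+1 om = rcons x j]).
  by apply: measurableI => //; apply: measurable_agree.
by apply/seteqP; split => om /= [? [?]].
Qed.

Lemma Ph_exit_event x j : x \in D ->
  Ph (exit_event x j) = ((\prod_(z <- D) p (v z)) * exit_value alpha D v x j)%:E.
Proof.
move=> xD; rewrite /exit_value; case: ifPn => xjD.
  rewrite mulr0 (_ : exit_event x j = set0) ?measure0 //.
  by apply/seteqP; split => om // [_ []]; rewrite xjD.
have prefD m : (m < size (rcons x j))%N -> take m (rcons x j) \in D.
  by rewrite size_rcons ltnS => hm; rewrite -cats1 takel_cat // D_closed.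
have fstS : [seq z.1 | z <- [seq (z, v z) | z <- D]] = D by rewrite -map_comp map_id.
rewrite -prod_size_biased_weight //.
rewrite -(big_map (fun z => (z, v z)) xpredT (size_biased_weight alpha p (rcons x j))).
rewrite -Ph_law ?fstS //; last first.
  move=> _ /mapP[z zD ->] /=; apply: contra xjD; rewrite prefixE => /eqP <-.
  exact: D_closed.
congr (Ph _); apply/seteqP; split => om /=; rewrite size_rcons.
  by move=> [Eom [ex _]]; split => // _ /mapP[z zD ->]; exact: Eom.
by move=> [ex H]; split => [z zD|//]; apply: (H (z, v z)); apply: map_f.
Qed.

Lemma Ph_agree_seq :
  Ph E = (\sum_(j <oo) \sum_(x <- D) ((\prod_(z <- D) p (v z)) * exit_value alpha D v x j)%:E)%E.
Proof.
have exit_uniq x x' j j' om : x \in D -> x' \in D ->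
    exit_event x j om -> exit_event x' j' om -> x = x' /\ j = j'.
  move=> xD x'D [_ [ex nD]] [_ [ex' nD']].
  exact: (lineage_exit_unique (iota0 om) (iotaS om) D_closed xD x'D nD nD' ex ex').
have -> : E = \bigcup_j \bigcup_(x in [set` D]) exit_event x j.
  apply/seteqP; split => [om Eom|om [j _ [x _ []]] //].
  have [x [j [xD nD ex]]] := lineage_exit (iota0 om) (iotaS om) rootD.
  by exists j => //; exists x.
rewrite measure_semi_bigcup //; first last.
- apply: bigcupT_measurable => j.
  by apply: fin_bigcup_measurable => // x _; apply: measurable_exit_event.
- move=> j j' _ _ [om [[x xD ex] [x' x'D ex']]].
  by have [_ ->] := exit_uniq _ _ _ _ _ xD x'D ex ex'.
- by move=> j; apply: fin_bigcup_measurable => // x _; apply: measurable_exit_event.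
apply: eq_eseriesr => j _; rewrite measure_fin_bigcup //; last 3 first.
- exact: finite_seq.
- move=> x x' xD x'D [om [ex ex']].
  by have [-> _] := exit_uniq _ _ _ _ _ xD x'D ex ex'.
- by move=> x _; apply: measurable_exit_event.
by rewrite -fsbig_seq //; apply: eq_big_seq => x xD; apply: Ph_exit_event.
Qed.

End ExitDecomposition.

Lemma Ph_ancestry_null (v : label -> life) x : p (v x) = 0 ->
  Ph [set om | forall z, z \in prefixes x -> Wh z om = v z] = 0 :> \bar R.
Proof.
move=> p0; rewrite Ph_agree_seq; last 3 first.
- exact: prefixes_uniq.
- exact: prefixes_closed.
- by rewrite mem_prefixes prefix0s.
apply: eseries0 => j _ _; rewrite big1 // => z _.
by rewrite (bigD1_seq x) ?mem_prefixes ?prefix_refl ?prefixes_uniq //= p0 !mul0r.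
Qed.

End SizeBiased.

Lemma esum_seq_mkcond {R : realType} (T : choiceType) (A : set T) (s : seq T) (f : T -> \bar R) :
  uniq s -> A `<=` [set` s] -> (forall y, A y -> (0 <= f y)%E) ->
  (\esum_(y in A) f y = \sum_(y <- s) if `[< A y >] then f y else 0)%E.
Proof.
move=> us As f0.
have eA : A = [set` [seq y <- s | `[< A y >]]].
  apply/seteqP; split => y /=; last by rewrite mem_filter => /andP[/asboolP].
  by move=> Ay; rewrite mem_filter asboolT //=; apply: As.
rewrite [in LHS]eA esum_fset; last 2 first.
- exact: finite_seq.
- by move=> y; rewrite inE /= mem_filter => /andP[/asboolP/f0].
by rewrite -fsbig_seq ?filter_uniq // big_filter big_mkcond.
Qed.

Lemma coming_rcons n (w : label -> life) x j : born_by n w x ->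
  coming n w (rcons x j) <->
  ~ born_by n w (rcons x j) /\ exists s, birth w (rcons x j) = Some s.
Proof.
move=> hb; split => [[_ [_ [_ [_ [s [hs ns]]]]]]|[nb [s hs]]].
  by split; [move=> [s' []]; rewrite hs => -[<-]; rewrite leqNgt ns | exists s].
exists x, j; split => //; split => //; exists s; split => //.
by rewrite ltnNge; apply/negP => sn; apply: nb; exists s.
Qed.

Section NermanFinite.
Variables (R : realType) (alpha : R) (n : nat) (w : label -> life) (D : seq label).
Hypotheses (uD : uniq D) (D_born : forall x, x \in D <-> born_by n w x).
Variable K : nat.
Hypothesis K_large : forall x, x \in D -> (size (w x) < K)%N.

Lemma exit_value_ge0 x j : 0 <= exit_value alpha D w x j.
Proof. by rewrite /exit_value /discount; case: ifP => //; case: birth => *; rewrite ?expR_ge0. Qed.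

Lemma exit_value_out x j : x \in D -> (K <= j)%N -> exit_value alpha D w x j = 0.
Proof.
move=> xD Kj; rewrite /exit_value birth_rcons; case: ifP => // _.
have /negbTE jw : ~~ (j <= size (w x))%N by rewrite -ltnNge (leq_trans (K_large xD) Kj).
by rewrite /tau jw andbF; case: birth.
Qed.

(* Every individual of the coming generation is a daughter of one born by [n]. *)
Lemma nerman_seq :
  nerman alpha n w = (\sum_(x <- D) \sum_(0 <= j < K) (exit_value alpha D w x j)%:E)%E.
Proof.
pose daughters := [seq rcons x j | x <- D, j <- index_iota 0 K].
have ud : uniq daughters.
  apply: allpairs_uniq => //; first exact: iota_uniq.
  by move=> [a b] [c e] _ _ /= /rcons_inj [-> ->].
have sub : coming n w `<=` [set` daughters].
  move=> _ [x [j [-> [hb [s [hs _]]]]]]; apply/allpairsP; exists (x, j); split => //=.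
    exact/D_born.
  move: hs; rewrite birth_rcons; case: birth => // a; case ht: tau => [b|] // _.
  have [_ hj _] := tauP ht.
  by rewrite mem_index_iota /= (leq_ltn_trans hj (K_large (proj2 (D_born x) hb))).
rewrite /nerman (esum_seq_mkcond ud sub) => [|y _]; last by rewrite lee_fin expR_ge0.
rewrite big_flatten big_map big_seq [RHS]big_seq; apply: eq_bigr => x xD.
rewrite big_map; apply: eq_bigr => j _.
have hb := proj1 (D_born x) xD.
rewrite (asbool_equiv_eq (coming_rcons j hb)) /exit_value.
case: (boolP (rcons x j \in D)) => [/D_born xjb|/negP xjnb].
  by rewrite asboolF // => -[].
case hs: (birth w (rcons x j)) => [s|]; last by rewrite asboolF // => -[_ []].
by rewrite asboolT //; split => [/D_born|]; [|exists s].
Qed.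

Lemma exit_series (c : R) : 0 <= c ->
  (\sum_(j <oo) \sum_(x <- D) (c * exit_value alpha D w x j)%:E
   = c%:E * \sum_(x <- D) \sum_(0 <= j < K) (exit_value alpha D w x j)%:E)%E.
Proof.
move=> c0; rewrite (nneseries_split 0 K) => [|k _]; last first.
  by apply: sume_ge0 => x _; rewrite lee_fin mulr_ge0 ?exit_value_ge0.
rewrite add0n (eseries0 (N := K) (P := xpredT)) => [|i Ki _]; last first.
  by rewrite big_seq big1 // => x xD; rewrite exit_value_out // mulr0.
rewrite adde0 exchange_big ge0_sume_distrr => [|x _]; last first.
  by apply: sume_ge0 => j _; rewrite lee_fin exit_value_ge0.
apply: eq_bigr => x _; rewrite ge0_sume_distrr => [|j _]; last by rewrite lee_fin exit_value_ge0.
by apply: eq_bigr => j _; rewrite EFinM.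
Qed.

End NermanFinite.

Unset Implicit Arguments.

Theorem lemma5p1 (R : realType)
  (* reproduction law *)
  (p : life -> R)
  (p_ge0 : forall l, 0 <= p l)
  (p_valid : forall l, ~~ valid_life l -> p l = 0)
  (p_sum1 : (\esum_(l in [set: life]) (p l)%:E = 1)%E)
  (* Malthusian parameter *)
  (alpha : R)
  (malthus : (\esum_(a in [set a : nat | (0 < a)%N])
                 ((expR (- alpha * a%:R))%:E * mean_at p a) = 1)%E)
  (* the CMJ tree under P: i.i.d. lives with law p *)
  (d : measure_display) (Omega : measurableType d) (P : probability Omega R)
  (W : label -> Omega -> life)
  (W_meas : forall x l, measurable [set om | W x om = l])
  (W_iid : forall S : seq (label * life), uniq (map fst S) ->
      P [set om | forall z, z \in S -> W z.1 om = z.2] = (\prod_(z <- S) p z.2)%:E)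
  (* the size-biased CMJ tree under Phat: lives Wh and immortal lineage iota *)
  (d' : measure_display) (Omega' : measurableType d') (Ph : probability Omega' R)
  (Wh : label -> Omega' -> life) (iota : nat -> Omega' -> label)
  (Wh_meas : forall x l, measurable [set om | Wh x om = l])
  (iota_meas : forall k y, measurable [set om | iota k om = y])
  (iota0 : forall om, iota 0%N om = [::])
  (iotaS : forall om k, exists j, iota k.+1 om = rcons (iota k om) j)
  (Ph_law : forall (y : label) (S : seq (label * life)),
      uniq (map fst S) ->
      (forall z, z \in S -> ~~ prefix y z.1) ->
      (forall m, (m < size y)%N -> take m y \in map fst S) ->
      Ph [set om | iota (size y) om = y /\ forall z, z \in S -> Wh z.1 om = z.2]
        = (\prod_(z <- S) size_biased_weight alpha p y z)%:E)
  (n : nat) (t : label -> option life) :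
  Ph [set om | stopped n (Wh ^~ om) = t]
  = (\int[P]_(om in [set om | stopped n (W ^~ om) = t]) nerman alpha n (W ^~ om))%E.
Proof.
have [[w0 <-]|nt] := pselect (exists w0, stopped n w0 = t); last first.
  have empty (T : Type) (V : label -> T -> life) : [set om | stopped n (V ^~ om) = t] = set0.
    by apply/seteqP; split => om // ?; apply: nt; exists (V ^~ om).
  by rewrite !empty measure0 integral_set0.
rewrite !stopped_event /agree_on_born.
have [[x [xb /p_valid p0]]|all_valid] :=
  pselect (exists x, born_by n w0 x /\ ~~ valid_life (w0 x)).
  rewrite integral_null_set; last 2 first.
  - exact: measurable_agree.
  - exact: (@measure_agree_null _ _ _ P W W_meas p W_iid _ w0 x xb p0).
  apply/eqP; rewrite eq_le measure_ge0 andbT.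
  rewrite -(Ph_ancestry_null Wh_meas iota_meas iota0 iotaS Ph_law p0).
  by apply: le_measure_agree => // z; rewrite mem_prefixes prefixE => /eqP <-; apply: born_by_take.
have valid_born x : born_by n w0 x -> valid_life (w0 x).
  by move=> xb; apply/negPn/negP => xnv; apply: all_valid; exists x.
have [D uD D_born] := born_by_finite valid_born.
have D_closed : prefix_closed D by move=> x m /D_born/(born_by_take m)/D_born.
pose K := (\max_(x <- D) size (w0 x)).+1.
have K_large x : x \in D -> (size (w0 x) < K)%N.
  by move=> xD; rewrite ltnS (@leq_bigmax_seq _ D xpredT (fun x => size (w0 x))).
have -> : born_by n w0 = (fun x => x \in D) by apply/funext => x; apply/propext; split => /D_born.
rewrite (Ph_agree_seq Wh_meas iota_meas iota0 iotaS Ph_law w0 uD D_closed); last first.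
  exact/D_born/born_by_nil.
rewrite (exit_series alpha K_large) ?prodr_ge0 // -(nerman_seq alpha uD D_born K_large).
rewrite (eq_integral (fun=> nerman alpha n w0)) => [|om /[!inE] /= agree]; last first.
  by apply: nerman_agree => x /D_born; apply: agree.
rewrite integral_cst; last exact: measurable_agree.
by rewrite [RHS]muleC; congr (_ * _)%E; apply/esym/(measure_agree_seq W_iid).
Qed.
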